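(* Let $H$ be a bialgebra, $\mathcal{A}$ an $H$-bimodule algebra, $\mathbb{A}$ an $H$-bicomodule algebra and $A$ an algebra in the Yetter–Drinfeld category ${}^H_H\mathcal{YD}$. Then: the generalized smash product $\mathcal{A}\blacktriangleright\!\!<A$ is an $H$-bimodule algebra with actions $h\cdot(\varphi\blacktriangleright\!\!<a)=h_1\cdot\varphi\blacktriangleright\!\!<h_2\cdot a$ and $(\varphi\blacktriangleright\!\!<a)\cdot h=\varphi\cdot h\blacktriangleright\!\!<a$; the generalized smash product $A\blacktriangleright\!\!<\mathbb{A}$ is an $H$-bicomodule algebra with coactions $\rho(a\blacktriangleright\!\!<u)=(a\blacktriangleright\!\!<u_{<0>})\otimes u_{<1>}$ and $\lambda(a\blacktriangleright\!\!<u)=a_{(-1)}u_{[-1]}\otimes(a_{(0)}\blacktriangleright\!\!<u_{[0]})$; and the identity map of $\mathcal{A}\otimes A\otimes\mathbb{A}$ is an algebra isomorphism $(\mathcal{A}\blacktriangleright\!\!<A)\natural\mathbb{A}\cong\mathcal{A}\natural(A\blacktriangleright\!\!<\mathbb{A})$.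
   Context: Work over a field $k$; $H$ an ordinary bialgebra, $\Delta(h)=h_1\otimes h_2$. An $H$-bimodule algebra is an associative unital algebra $\mathcal{A}$ which is an $H$-bimodule with $h\cdot(\varphi\psi)=(h_1\cdot\varphi)(h_2\cdot\psi)$, $(\varphi\psi)\cdot h=(\varphi\cdot h_1)(\psi\cdot h_2)$, $h\cdot1=1\cdot h=\varepsilon(h)1$. An $H$-bicomodule algebra is an associative unital algebra $\mathbb{A}$ with algebra maps $\lambda(u)=u_{[-1]}\otimes u_{[0]}$ (left $H$-coaction) and $\rho(u)=u_{<0>}\otimes u_{<1>}$ (right $H$-coaction) making $\mathbb{A}$ an $H$-bicomodule. An algebra $A$ in ${}^H_H\mathcal{YD}$ is a left $H$-module algebra (action $h\cdot a$) and left $H$-comodule algebra (coaction $a\mapsto a_{(-1)}\otimes a_{(0)}$) such that $h_1a_{(-1)}\otimes h_2\cdot a_{(0)}=(h_1\cdot a)_{(-1)}h_2\otimes(h_1\cdot a)_{(0)}$. For a left $H$-module algebra $M$ and a left $H$-comodule algebra $N$ (coaction $n\mapsto n_{\{-1\}}\otimes n_{\{0\}}$), the generalized smash product $M\blacktriangleright\!\!<N$ is $M\otimes N$ with product $(m\blacktriangleright\!\!<n)(m'\blacktriangleright\!\!<n')=m(n_{\{-1\}}\cdot m')\blacktriangleright\!\!<n_{\{0\}}n'$ (here $\mathcal{A}$ is viewed as a left $H$-module algebra via its left action). For an $H$-bimodule algebra $\mathcal{B}$ and $H$-bicomodule algebra $\mathbb{B}$, the L-R-smash product $\mathcal{B}\natural\mathbb{B}$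 is $\mathcal{B}\otimes\mathbb{B}$ with product $(\varphi\natural u)(\psi\natural u')=(\varphi\cdot u'_{<1>})(u_{[-1]}\cdot\psi)\natural u_{[0]}u'_{<0>}$. *)

From HB Require Import structures.
From mathcomp Require Import all_boot all_algebra.

Set Implicit Arguments.
Unset Strict Implicit.
Unset Printing Implicit Defensive.

Import GRing.Theory.
Local Open Scope ring_scope.

(* Conventions:
   - k is a field; all vector spaces are [lmodType k].
   - An element of a tensor product V1 (x) ... (x) Vn is represented by a
     finite list of elementary tensors (tuples); two lists represent the same
     tensor iff every n-multilinear map into every k-vector space sends them
     to the same sum (universal property of the tensor product).
   - Sweedler sums h_1 (x) h_2 etc. are such lists. *)

Section Tensors.
Variable k : fieldType.

Definition lin1 (V X : lmodType k) (f : V -> X) : Prop :=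
  forall (a : k) (u v : V), f (a *: u + v) = a *: f u + f v.

Definition multilin2 (V1 V2 X : lmodType k) (f : V1 -> V2 -> X) : Prop :=
  (forall x2, lin1 (fun x1 => f x1 x2)) /\ (forall x1, lin1 (fun x2 => f x1 x2)).

Definition multilin3 (V1 V2 V3 X : lmodType k) (f : V1 -> V2 -> V3 -> X) : Prop :=
  [/\ forall x2 x3, lin1 (fun x1 => f x1 x2 x3),
      forall x1 x3, lin1 (fun x2 => f x1 x2 x3) &
      forall x1 x2, lin1 (fun x3 => f x1 x2 x3)].

Definition multilin4 (V1 V2 V3 V4 X : lmodType k)
    (f : V1 -> V2 -> V3 -> V4 -> X) : Prop :=
  [/\ forall x2 x3 x4, lin1 (fun x1 => f x1 x2 x3 x4),
      forall x1 x3 x4, lin1 (fun x2 => f x1 x2 x3 x4),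
      forall x1 x2 x4, lin1 (fun x3 => f x1 x2 x3 x4) &
      forall x1 x2 x3, lin1 (fun x4 => f x1 x2 x3 x4)].

Definition teq2 (V1 V2 : lmodType k) (s t : seq (V1 * V2)) : Prop :=
  forall (X : lmodType k) (f : V1 -> V2 -> X), multilin2 f ->
    \sum_(p <- s) f p.1 p.2 = \sum_(p <- t) f p.1 p.2.

Definition teq3 (V1 V2 V3 : lmodType k) (s t : seq (V1 * V2 * V3)) : Prop :=
  forall (X : lmodType k) (f : V1 -> V2 -> V3 -> X), multilin3 f ->
    \sum_(p <- s) f p.1.1 p.1.2 p.2 = \sum_(p <- t) f p.1.1 p.1.2 p.2.

Definition teq4 (V1 V2 V3 V4 : lmodType k) (s t : seq (V1 * V2 * V3 * V4)) : Prop :=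
  forall (X : lmodType k) (f : V1 -> V2 -> V3 -> V4 -> X), multilin4 f ->
    \sum_(p <- s) f p.1.1.1 p.1.1.2 p.1.2 p.2
    = \sum_(p <- t) f p.1.1.1 p.1.1.2 p.1.2 p.2.

Definition tscale2 (V1 V2 : lmodType k) (a : k) (s : seq (V1 * V2)) :=
  [seq (a *: p.1, p.2) | p <- s].
Definition tscale3 (V1 V2 V3 : lmodType k) (a : k) (s : seq (V1 * V2 * V3)) :=
  [seq (a *: p.1.1, p.1.2, p.2) | p <- s].

(* For an honest vector space one takes eqv := eq; for a tensor product
   represented by lists one takes eqv := teq2, add := cat, zero := [::]. *)
Section SetoidStructures.
Variables (T : Type) (eqv : T -> T -> Prop) (add : T -> T -> T) (zero : T)
          (scale : k -> T -> T) (mul : T -> T -> T) (one : T).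

Record is_algebra : Prop := {
  alg_mul_proper : forall x x' y y', eqv x x' -> eqv y y' ->
                     eqv (mul x y) (mul x' y');
  alg_mul_linl : forall a x x' y,
      eqv (mul (add (scale a x) x') y) (add (scale a (mul x y)) (mul x' y));
  alg_mul_linr : forall a x y y',
      eqv (mul x (add (scale a y) y')) (add (scale a (mul x y)) (mul x y'));
  alg_mulA : forall x y z, eqv (mul (mul x y) z) (mul x (mul y z));
  alg_mul1l : forall x, eqv (mul one x) x;
  alg_mul1r : forall x, eqv (mul x one) x }.

Variables (H : algType k) (Delta : H -> seq (H * H)) (eps : H -> k).

Definition sumD (h : H) (F : H -> H -> T) : T :=
  foldr (fun p acc => add (F p.1 p.2) acc) zero (Delta h).

Record is_left_module_algebra (act : H -> T -> T) : Prop := {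
  lma_alg : is_algebra;
  lma_proper : forall h x y, eqv x y -> eqv (act h x) (act h y);
  lma_linH : forall a g h x,
      eqv (act (a *: g + h) x) (add (scale a (act g x)) (act h x));
  lma_linT : forall h a x y,
      eqv (act h (add (scale a x) y)) (add (scale a (act h x)) (act h y));
  lma_act1 : forall x, eqv (act 1 x) x;
  lma_actM : forall g h x, eqv (act (g * h) x) (act g (act h x));
  lma_act_mul : forall h x y,
      eqv (act h (mul x y)) (sumD h (fun h1 h2 => mul (act h1 x) (act h2 y)));
  lma_act_one : forall h, eqv (act h one) (scale (eps h) one) }.

Record is_right_module_algebra (act : T -> H -> T) : Prop := {
  rma_alg : is_algebra;
  rma_proper : forall h x y, eqv x y -> eqv (act x h) (act y h);
  rma_linH : forall a g h x,
      eqv (act x (a *: g + h)) (add (scale a (act x g)) (act x h));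
  rma_linT : forall h a x y,
      eqv (act (add (scale a x) y) h) (add (scale a (act x h)) (act y h));
  rma_act1 : forall x, eqv (act x 1) x;
  rma_actM : forall g h x, eqv (act x (g * h)) (act (act x g) h);
  rma_act_mul : forall h x y,
      eqv (act (mul x y) h) (sumD h (fun h1 h2 => mul (act x h1) (act y h2)));
  rma_act_one : forall h, eqv (act one h) (scale (eps h) one) }.

Record is_bimodule_algebra (lact : H -> T -> T) (ract : T -> H -> T) : Prop := {
  bma_left : is_left_module_algebra lact;
  bma_right : is_right_module_algebra ract;
  bma_comm : forall h g x, eqv (lact h (ract x g)) (ract (lact h x) g) }.

End SetoidStructures.

Section Hopf.
Variables (H : algType k) (Delta : H -> seq (H * H)) (eps : H -> k).

Record is_bialgebra : Prop := {
  bi_Delta_lin : forall a x y,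
      teq2 (Delta (a *: x + y)) (tscale2 a (Delta x) ++ Delta y);
  bi_eps_lin : forall a x y, eps (a *: x + y) = a * eps x + eps y;
  bi_coassoc : forall h,
      teq3 [seq (q.1, q.2, p.2) | p <- Delta h, q <- Delta p.1]
           [seq (p.1, q.1, q.2) | p <- Delta h, q <- Delta p.2];
  bi_counitl : forall h, \sum_(p <- Delta h) eps p.1 *: p.2 = h;
  bi_counitr : forall h, \sum_(p <- Delta h) eps p.2 *: p.1 = h;
  bi_DeltaM : forall x y,
      teq2 (Delta (x * y)) [seq (p.1 * q.1, p.2 * q.2) | p <- Delta x, q <- Delta y];
  bi_Delta1 : teq2 (Delta 1) [:: (1, 1)];
  bi_epsM : forall x y, eps (x * y) = eps x * eps y;
  bi_eps1 : eps 1 = 1 }.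

Definition algebra_on (M : lmodType k) (mul : M -> M -> M) (one : M) :=
  is_algebra (@eq M) +%R ( *:%R) mul one.

Definition H_bimodule_algebra (M : lmodType k) (mul : M -> M -> M) (one : M)
    (lact : H -> M -> M) (ract : M -> H -> M) :=
  is_bimodule_algebra (@eq M) +%R 0 ( *:%R) mul one Delta eps lact ract.

Definition H_left_module_algebra (M : lmodType k) (mul : M -> M -> M) (one : M)
    (act : H -> M -> M) :=
  is_left_module_algebra (@eq M) +%R 0 ( *:%R) mul one Delta eps act.

Section Comodules.
Variables (M : lmodType k) (mul : M -> M -> M) (one : M).

Record is_left_comodule_algebra (lam : M -> seq (H * M)) : Prop := {
  lca_alg : algebra_on mul one;
  lca_lin : forall a x y, teq2 (lam (a *: x + y)) (tscale2 a (lam x) ++ lam y);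
  lca_coassoc : forall u,
      teq3 [seq (q.1, q.2, p.2) | p <- lam u, q <- Delta p.1]
           [seq (p.1, q.1, q.2) | p <- lam u, q <- lam p.2];
  lca_counit : forall u, \sum_(p <- lam u) eps p.1 *: p.2 = u;
  lca_mul : forall x y,
      teq2 (lam (mul x y)) [seq (p.1 * q.1, mul p.2 q.2) | p <- lam x, q <- lam y];
  lca_one : teq2 (lam one) [:: (1, one)] }.

Record is_right_comodule_algebra (rho : M -> seq (M * H)) : Prop := {
  rca_alg : algebra_on mul one;
  rca_lin : forall a x y, teq2 (rho (a *: x + y)) (tscale2 a (rho x) ++ rho y);
  rca_coassoc : forall u,
      teq3 [seq (q.1, q.2, p.2) | p <- rho u, q <- rho p.1]
           [seq (p.1, q.1, q.2) | p <- rho u, q <- Delta p.2];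
  rca_counit : forall u, \sum_(p <- rho u) eps p.2 *: p.1 = u;
  rca_mul : forall x y,
      teq2 (rho (mul x y)) [seq (mul p.1 q.1, p.2 * q.2) | p <- rho x, q <- rho y];
  rca_one : teq2 (rho one) [:: (one, 1)] }.

(* H-bicomodule algebra: lam(u) = u_[-1] (x) u_[0], rho(u) = u_<0> (x) u_<1> *)
Record is_bicomodule_algebra (lam : M -> seq (H * M)) (rho : M -> seq (M * H))
  : Prop := {
  bca_left : is_left_comodule_algebra lam;
  bca_right : is_right_comodule_algebra rho;
  bca_compat : forall u,
      teq3 [seq (q.1, q.2, p.2) | p <- rho u, q <- lam p.1]
           [seq (p.1, q.1, q.2) | p <- lam u, q <- rho p.2] }.

Record is_YD_algebra (act : H -> M -> M) (lam : M -> seq (H * M)) : Prop := {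
  yd_module : H_left_module_algebra mul one act;
  yd_comodule : is_left_comodule_algebra lam;
  yd_compat : forall h a,
      teq2 [seq (p.1 * q.1, act p.2 q.2) | p <- Delta h, q <- lam a]
           [seq (q.1 * p.2, q.2) | p <- Delta h, q <- lam (act p.1 a)] }.
End Comodules.

(* Generalized smash product M >< N, on representatives in M (x) N:
   (m >< n)(m' >< n') = m (n_{-1} . m') >< n_{0} n'                    *)
Definition smash_mul (M N : lmodType k) (mulM : M -> M -> M) (mulN : N -> N -> N)
    (act : H -> M -> M) (lam : N -> seq (H * N)) (s t : seq (M * N))
  : seq (M * N) :=
  [seq x | p <- s,
           x <- [seq (mulM p.1 (act r.1 q.1), mulN r.2 q.2) | q <- t, r <- lam p.2]].

Definition smash_one (M N : lmodType k) (oneM : M) (oneN : N) : seq (M * N) :=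
  [:: (oneM, oneN)].


Definition smash_lact (M N : lmodType k) (actM : H -> M -> M) (actN : H -> N -> N)
    (h : H) (s : seq (M * N)) : seq (M * N) :=
  [seq (actM p.1 q.1, actN p.2 q.2) | q <- s, p <- Delta h].

Definition smash_ract (M N : lmodType k) (ractM : M -> H -> M)
    (s : seq (M * N)) (h : H) : seq (M * N) :=
  [seq (ractM q.1 h, q.2) | q <- s].

Definition smash_rho (M N : lmodType k) (rhoN : N -> seq (N * H))
    (s : seq (M * N)) : seq (M * N * H) :=
  [seq (q.1, p.1, p.2) | q <- s, p <- rhoN q.2].

Definition smash_lam (M N : lmodType k) (lamM : M -> seq (H * M))
    (lamN : N -> seq (H * N)) (s : seq (M * N)) : seq (H * M * N) :=
  [seq x | q <- s,
           x <- [seq (p.1 * r.1, p.2, r.2) | p <- lamM q.1, r <- lamN q.2]].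

Record is_rep_bicomodule_algebra (M N : lmodType k)
    (mul : seq (M * N) -> seq (M * N) -> seq (M * N)) (one : seq (M * N))
    (lam : seq (M * N) -> seq (H * M * N)) (rho : seq (M * N) -> seq (M * N * H))
  : Prop := {
  rbca_alg : is_algebra (@teq2 M N) cat (@tscale2 M N) mul one;
  rbca_lam_proper : forall s t, teq2 s t -> teq3 (lam s) (lam t);
  rbca_rho_proper : forall s t, teq2 s t -> teq3 (rho s) (rho t);
  rbca_lam_lin : forall a s t,
      teq3 (lam (tscale2 a s ++ t)) ([seq (a *: p.1.1, p.1.2, p.2) | p <- lam s] ++ lam t);
  rbca_rho_lin : forall a s t,
      teq3 (rho (tscale2 a s ++ t)) (tscale3 a (rho s) ++ rho t);
  rbca_lam_coassoc : forall s,
      teq4 [seq (q.1, q.2, p.1.2, p.2) | p <- lam s, q <- Delta p.1.1]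
           [seq (p.1.1, q.1.1, q.1.2, q.2) | p <- lam s, q <- lam [:: (p.1.2, p.2)]];
  rbca_lam_counit : forall s, teq2 [seq (eps p.1.1 *: p.1.2, p.2) | p <- lam s] s;
  rbca_rho_coassoc : forall s,
      teq4 [seq (q.1.1, q.1.2, q.2, p.2) | p <- rho s, q <- rho [:: (p.1.1, p.1.2)]]
           [seq (p.1.1, p.1.2, q.1, q.2) | p <- rho s, q <- Delta p.2];
  rbca_rho_counit : forall s, teq2 [seq (eps p.2 *: p.1.1, p.1.2) | p <- rho s] s;
  rbca_lam_mul : forall s t,
      teq3 (lam (mul s t))
           [seq x | p <- lam s, x <- [seq (p.1.1 * q.1.1, y.1, y.2)
                                     | q <- lam t, y <- mul [:: (p.1.2, p.2)] [:: (q.1.2, q.2)]]];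
  rbca_lam_one : teq3 (lam one) [seq (1, y.1, y.2) | y <- one];
  rbca_rho_mul : forall s t,
      teq3 (rho (mul s t))
           [seq x | p <- rho s, x <- [seq (y.1, y.2, p.2 * q.2)
                                     | q <- rho t, y <- mul [:: (p.1.1, p.1.2)] [:: (q.1.1, q.1.2)]]];
  rbca_rho_one : teq3 (rho one) [seq (y.1, y.2, 1) | y <- one];
  rbca_compat : forall s,
      teq4 [seq (q.1.1, q.1.2, q.2, p.2) | p <- rho s, q <- lam [:: (p.1.1, p.1.2)]]
           [seq (p.1.1, q.1.1, q.1.2, q.2) | p <- lam s, q <- rho [:: (p.1.2, p.2)]] }.

(* L-R-smash products, on representatives of elements of V1 (x) V2 (x) W.
   (phi # u)(psi # u') = (phi . u'_<1>)(u_[-1] . psi) # u_[0] u'_<0>     *)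

(* (V1 >< V2) # W, where B = V1 >< V2 is given on representatives *)
Definition lr_mul_left (V1 V2 W : lmodType k)
    (mulB : seq (V1 * V2) -> seq (V1 * V2) -> seq (V1 * V2))
    (lactB : H -> seq (V1 * V2) -> seq (V1 * V2))
    (ractB : seq (V1 * V2) -> H -> seq (V1 * V2))
    (mulW : W -> W -> W) (lamW : W -> seq (H * W)) (rhoW : W -> seq (W * H))
    (s t : seq (V1 * V2 * W)) : seq (V1 * V2 * W) :=
  [seq z | x <- s, z <-
   [seq z | y <- t, z <-
    [seq z | p <- rhoW y.2, z <-
     [seq (b.1, b.2, mulW q.2 p.1)
     | q <- lamW x.2, b <- mulB (ractB [:: x.1] p.2) (lactB q.1 [:: y.1])]]]].

(* V1 # (V2 >< W), where the bicomodule algebra V2 >< W is given on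
   representatives *)
Definition lr_mul_right (V1 V2 W : lmodType k)
    (mulV : V1 -> V1 -> V1) (lactV : H -> V1 -> V1) (ractV : V1 -> H -> V1)
    (mulB : seq (V2 * W) -> seq (V2 * W) -> seq (V2 * W))
    (lamB : seq (V2 * W) -> seq (H * V2 * W))
    (rhoB : seq (V2 * W) -> seq (V2 * W * H))
    (s t : seq (V1 * V2 * W)) : seq (V1 * V2 * W) :=
  [seq z | x <- s, z <-
   [seq z | y <- t, z <-
    [seq z | p <- rhoB [:: (y.1.2, y.2)], z <-
     [seq (mulV (ractV x.1.1 p.2) (lactV q.1.1 y.1.1), b.1, b.2)
     | q <- lamB [:: (x.1.2, x.2)],
       b <- mulB [:: (q.1.2, q.2)] [:: (p.1.1, p.1.2)]]]]].

End Hopf.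
End Tensors.

From HB Require Import structures.
From mathcomp Require Import all_boot all_algebra.

Set Implicit Arguments.
Unset Strict Implicit.
Unset Printing Implicit Defensive.

Import GRing.Theory.
Local Open Scope ring_scope.

(* All three claims are identities between finite sums of elementary
   tensors, proved by applying an arbitrary multilinear map and rearranging
   the resulting Sweedler sums.  The key input is the Yetter-Drinfeld
   condition (h_1.a)_(-1) h_2 (x) (h_1.a)_(0) = h_1 a_(-1) (x) h_2.a_(0),
   which moves h (resp. u_[-1]) past the coaction of A: it makes the diagonal
   action on cA >< A multiplicative and, with the coassociativity of the left
   coaction of bA, the left coaction on A >< bA multiplicative.  The right
   coaction on A >< bA is multiplicative because the two coactions of bA
   commute.  The two products on cA (x) A (x) bA coincide once u_[-1] is split
   by the coassociativity of lambda and the two actions on cA are composed. *)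

Section Linearity.
Variable k : fieldType.

Lemma lin1_0 (V X : lmodType k) (f : V -> X) : lin1 f -> f 0 = 0.
Proof.
move=> Hf; have E := Hf 1 0 0; rewrite !scale1r addr0 in E.
by apply: (addrI (f 0)); rewrite addr0 -E.
Qed.

Lemma lin1Z (V X : lmodType k) (f : V -> X) a u : lin1 f -> f (a *: u) = a *: f u.
Proof. by move=> Hf; have := Hf a u 0; rewrite !addr0 (lin1_0 Hf) addr0. Qed.

Lemma lin1D (V X : lmodType k) (f : V -> X) u v : lin1 f -> f (u + v) = f u + f v.
Proof. by move=> Hf; have := Hf 1 u v; rewrite !scale1r. Qed.

Lemma lin1_sum (V X : lmodType k) (f : V -> X) (I : Type) (s : seq I) (F : I -> V) :
  lin1 f -> f (\sum_(i <- s) F i) = \sum_(i <- s) f (F i).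
Proof.
move=> Hf; elim: s => [|x s IH]; first by rewrite !big_nil (lin1_0 Hf).
by rewrite !big_cons (lin1D _ _ Hf) IH.
Qed.

Lemma lin1_id (V : lmodType k) : lin1 (fun x : V => x).
Proof. by []. Qed.

Lemma lin1_sumf (V X : lmodType k) (I : Type) (s : seq I) (F : I -> V -> X) :
  (forall i, lin1 (fun x => F i x)) -> lin1 (fun x => \sum_(i <- s) F i x).
Proof.
move=> HF a u v; rewrite scaler_sumr -big_split /=.
by apply: eq_bigr => i _; rewrite HF.
Qed.

Lemma lin1_comp (U V X : lmodType k) (g : U -> X) (E : V -> U) :
  lin1 g -> lin1 E -> lin1 (fun x => g (E x)).
Proof. by move=> Hg HE a u v /=; rewrite HE Hg. Qed.

Lemma lin1_comp1 (U V X : lmodType k) (C1 : Type) (g : U -> C1 -> X) c1 (E : V -> U) :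
  lin1 (fun u => g u c1) -> lin1 E -> lin1 (fun x => g (E x) c1).
Proof. by move=> Hg HE a u v /=; rewrite HE Hg. Qed.

Lemma lin1_comp2 (U V X : lmodType k) (C1 C2 : Type) (g : U -> C1 -> C2 -> X)
    c1 c2 (E : V -> U) :
  lin1 (fun u => g u c1 c2) -> lin1 E -> lin1 (fun x => g (E x) c1 c2).
Proof. by move=> Hg HE a u v /=; rewrite HE Hg. Qed.

Lemma lin1_comp3 (U V X : lmodType k) (C1 C2 C3 : Type)
    (g : U -> C1 -> C2 -> C3 -> X) c1 c2 c3 (E : V -> U) :
  lin1 (fun u => g u c1 c2 c3) -> lin1 E -> lin1 (fun x => g (E x) c1 c2 c3).
Proof. by move=> Hg HE a u v /=; rewrite HE Hg. Qed.

Lemma lin1_mull (R : algType k) (c : R) : lin1 (fun u : R => u * c).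
Proof. by move=> a u v; rewrite mulrDl scalerAl. Qed.

Lemma lin1_mulr (R : algType k) (c : R) : lin1 (fun u : R => c * u).
Proof. by move=> a u v; rewrite mulrDr scalerAr. Qed.

Lemma lin1_epsZ (H V X : lmodType k) (eps : H -> k) (c : X) (E : V -> H) :
    (forall a x y, eps (a *: x + y) = a * eps x + eps y) ->
  lin1 E -> lin1 (fun x => eps (E x) *: c).
Proof. by move=> Heps HE a u v; rewrite HE Heps scalerDl scalerA. Qed.

End Linearity.

Section TensorSums.
Variable k : fieldType.

Lemma teq2_sum (V1 V2 X : lmodType k) (s t : seq (V1 * V2)) (F : V1 * V2 -> X) :
  teq2 s t -> multilin2 (fun a b => F (a, b)) ->
  \sum_(p <- s) F p = \sum_(p <- t) F p.
Proof.
move=> Hst HF; have := Hst X (fun a b => F (a, b)) HF.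
have E (r : seq (V1 * V2)) : \sum_(p <- r) F (p.1, p.2) = \sum_(p <- r) F p.
  by apply: eq_bigr => -[].
by rewrite !E.
Qed.

Lemma teq3_sum (V1 V2 V3 X : lmodType k) (s t : seq (V1 * V2 * V3))
    (F : V1 * V2 * V3 -> X) :
  teq3 s t -> multilin3 (fun a b c => F (a, b, c)) ->
  \sum_(p <- s) F p = \sum_(p <- t) F p.
Proof.
move=> Hst HF; have := Hst X (fun a b c => F (a, b, c)) HF.
have E (r : seq (V1 * V2 * V3)) :
    \sum_(p <- r) F (p.1.1, p.1.2, p.2) = \sum_(p <- r) F p.
  by apply: eq_bigr => -[[]].
by rewrite !E.
Qed.

(* All coassociativity-type axioms have the shape below.  The summand [G p q]
   is applied to the bound pairs, so that the left-hand sides are higher-order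
   patterns usable by [rewrite]; the side condition says that [G] ignores the
   component of [p] that the other side does not provide. *)
Section Coassociativity.
Variables (V1 V2 V3 W1 W2 X : lmodType k).
Variables (S1 : seq (W1 * V3)) (T1 : W1 -> seq (V1 * V2)).
Variables (S2 : seq (V1 * W2)) (T2 : W2 -> seq (V2 * V3)).
Hypothesis coassoc :
  teq3 [seq (q.1, q.2, p.2) | p <- S1, q <- T1 p.1]
       [seq (p.1, q.1, q.2) | p <- S2, q <- T2 p.2].

Lemma big_coassoc (G : W1 * V3 -> V1 * V2 -> X) :
  (forall p q, G p q = G (0, p.2) q) ->
  multilin3 (fun a b c => G (0, c) (a, b)) ->
  \sum_(p <- S1) \sum_(q <- T1 p.1) G p q =
  \sum_(p <- S2) \sum_(q <- T2 p.2) G (0, q.2) (p.1, q.1).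
Proof.
move=> HG HF; have := teq3_sum (F := fun x => G (0, x.2) (x.1.1, x.1.2)) coassoc HF.
rewrite !big_allpairs_dep /= => <-.
by apply: eq_bigr => p _; apply: eq_bigr => -[q1 q2] _; rewrite HG.
Qed.

Lemma big_coassocV (G : V1 * W2 -> V2 * V3 -> X) :
  (forall p q, G p q = G (p.1, 0) q) ->
  multilin3 (fun a b c => G (a, 0) (b, c)) ->
  \sum_(p <- S2) \sum_(q <- T2 p.2) G p q =
  \sum_(p <- S1) \sum_(q <- T1 p.1) G (q.1, 0) (q.2, p.2).
Proof.
move=> HG HF; have := teq3_sum (F := fun x => G (x.1.1, 0) (x.1.2, x.2)) coassoc HF.
rewrite !big_allpairs_dep /= => ->.
by apply: eq_bigr => p _; apply: eq_bigr => -[q1 q2] _; rewrite HG.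
Qed.

End Coassociativity.

Definition tlin2 (U V1 V2 : lmodType k) (L : U -> seq (V1 * V2)) :=
  forall a u v, teq2 (L (a *: u + v)) (tscale2 a (L u) ++ L v).

Lemma big_tscale2 (V1 V2 X : lmodType k) a (s t : seq (V1 * V2)) (F : V1 * V2 -> X) :
  (forall y, lin1 (fun x => F (x, y))) ->
  \sum_(p <- tscale2 a s ++ t) F p = a *: \sum_(p <- s) F p + \sum_(p <- t) F p.
Proof.
move=> HF; rewrite big_cat big_map scaler_sumr; congr (_ + _).
by apply: eq_bigr => -[x y] _ /=; rewrite (lin1Z _ _ (HF y)).
Qed.

Lemma big_tscale3 (V1 V2 V3 X : lmodType k) a (s t : seq (V1 * V2 * V3))
    (F : V1 * V2 * V3 -> X) :
  (forall y z, lin1 (fun x => F (x, y, z))) ->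
  \sum_(p <- tscale3 a s ++ t) F p = a *: \sum_(p <- s) F p + \sum_(p <- t) F p.
Proof.
move=> HF; rewrite big_cat big_map scaler_sumr; congr (_ + _).
by apply: eq_bigr => -[[x y] z] _ /=; rewrite (lin1Z _ _ (HF y z)).
Qed.

Lemma lin1_sum_tlin2 (U V X V1 V2 : lmodType k) (L : U -> seq (V1 * V2))
    (F : V1 * V2 -> X) (E : V -> U) :
  tlin2 L -> multilin2 (fun a b => F (a, b)) -> lin1 E ->
  lin1 (fun x => \sum_(p <- L (E x)) F p).
Proof.
move=> HL [HF1 HF2] HE a u v /=.
by rewrite HE (teq2_sum (HL _ _ _)) ?big_tscale2.
Qed.

End TensorSums.

(* Linearity goals are closed from the linearity facts found in the context;
   this is why the sections below declare such facts as [Let]s. *)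
Ltac lin_atom :=
  first [ assumption | apply: lin1_mull | apply: lin1_mulr
        | match goal with H : _ |- _ => apply: H end
        | match goal with HB : is_bialgebra _ _ |- _ =>
            apply: lin1_epsZ; [exact: (bi_eps_lin HB) | solve_lin] end ]
with solve_lin :=
  cbn beta iota delta [fst snd];
  first
  [ exact: lin1_id
  | solve [ lin_atom ]
  | apply: lin1_sumf => ?; solve_lin
  | apply: lin1_sum_tlin2; [ lin_atom | solve_ml | solve_lin ]
  | apply: lin1_comp; [ lin_atom | solve_lin ]
  | apply: lin1_comp1; [ lin_atom | solve_lin ]
  | apply: lin1_comp2; [ lin_atom | solve_lin ]
  | apply: lin1_comp3; [ lin_atom | solve_lin ] ]
with solve_ml :=
  cbn beta iota delta [fst snd]; split => *; solve_lin.

(* [srw t] rewrites with [t] and discharges its side conditions: those of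
   [big_coassoc] and linearity. *)
Ltac side := first [ solve [ move=> [? ?] [? ?]; reflexivity ]
  | solve [ move=> [? ?] [? ?] [? ?]; reflexivity ] | solve [ solve_ml ]
  | solve [ intros; solve_lin ] ].
Tactic Notation "srw" open_constr(t) := rewrite t; [ | side .. ].

Ltac cs := cbn beta iota delta [fst snd].
Ltac deep tac := first [ progress tac | under eq_bigr => ? _ do deep tac ].
Ltac deepL tac := first [ progress tac | under [LHS]eq_bigr => ? _ do deep tac ].
Ltac deepR tac := first [ progress tac | under [RHS]eq_bigr => ? _ do deep tac ].
Ltac at_depth n tac := lazymatch n with
  | O => tac | S ?m => under eq_bigr => ? _ do at_depth m tac end.
Ltac atL n tac := lazymatch n with
  | O => tac | S ?m => under [LHS]eq_bigr => ? _ do at_depth m tac end.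
Ltac atR n tac := lazymatch n with
  | O => tac | S ?m => under [RHS]eq_bigr => ? _ do at_depth m tac end.

Section SweedlerSums.
Variables (k : fieldType) (H : algType k) (Delta : H -> seq (H * H)) (eps : H -> k).
Hypothesis HB : is_bialgebra Delta eps.

Let Delta_tlin2 : tlin2 Delta := bi_Delta_lin HB.

Lemma big_DeltaM (X : lmodType k) x y (F : H * H -> X) :
  multilin2 (fun a b => F (a, b)) ->
  \sum_(p <- Delta (x * y)) F p =
  \sum_(p <- Delta x) \sum_(q <- Delta y) F (p.1 * q.1, p.2 * q.2).
Proof. by move=> HF; rewrite (teq2_sum (bi_DeltaM HB x y) HF) big_allpairs_dep. Qed.

Lemma big_Delta1 (X : lmodType k) (F : H * H -> X) :
  multilin2 (fun a b => F (a, b)) -> \sum_(p <- Delta 1) F p = F (1, 1).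
Proof. by move=> HF; rewrite (teq2_sum (bi_Delta1 HB) HF) big_seq1. Qed.

Lemma big_Delta_counitl (X : lmodType k) h (G : H -> X) :
  lin1 G -> \sum_(p <- Delta h) eps p.1 *: G p.2 = G h.
Proof.
move=> HG; rewrite -[in RHS](bi_counitl HB h) (lin1_sum _ _ HG).
by apply: eq_bigr => p _; rewrite (lin1Z _ _ HG).
Qed.

Lemma big_Delta_coassoc4 (X : lmodType k) h (G : H * H -> H * H -> H * H -> X) :
  (forall d e g, G d e g = G (0, 0) (e.1, e.2) (g.1, g.2)) ->
  multilin4 (fun a b c d => G (0, 0) (a, b) (c, d)) ->
  \sum_(d <- Delta h) \sum_(e <- Delta d.1) \sum_(g <- Delta d.2) G d e g =
  \sum_(d <- Delta h) \sum_(q <- Delta d.1) \sum_(m <- Delta q.2)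
     G (0, 0) (q.1, m.1) (m.2, d.2).
Proof.
move=> HG [H1 H2 H3 H4].
under eq_bigr => d _ do rewrite exchange_big.
transitivity (\sum_(d <- Delta h) \sum_(g <- Delta d.2) \sum_(e <- Delta d.1)
   G (0, 0) (e.1, e.2) (g.1, g.2)).
  by apply: eq_bigr => d _; apply: eq_bigr => g _; apply: eq_bigr => e _; rewrite HG.
srw (big_coassocV (bi_coassoc HB h)); cs.
by under eq_bigr => d _ do srw (big_coassoc (bi_coassoc HB _)).
Qed.

Section LeftComodule.
Variables (M : lmodType k) (mul : M -> M -> M) (one : M) (lam : M -> seq (H * M)).
Hypothesis HL : is_left_comodule_algebra Delta eps mul one lam.

Lemma big_lamM (X : lmodType k) x y (F : H * M -> X) :
  multilin2 (fun a b => F (a, b)) ->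
  \sum_(p <- lam (mul x y)) F p =
  \sum_(p <- lam x) \sum_(q <- lam y) F (p.1 * q.1, mul p.2 q.2).
Proof. by move=> HF; rewrite (teq2_sum (lca_mul HL x y) HF) big_allpairs_dep. Qed.

Lemma big_lam1 (X : lmodType k) (F : H * M -> X) :
  multilin2 (fun a b => F (a, b)) -> \sum_(p <- lam one) F p = F (1, one).
Proof. by move=> HF; rewrite (teq2_sum (lca_one HL) HF) big_seq1. Qed.

Lemma big_lam_counit (X : lmodType k) u (G : M -> X) :
  lin1 G -> \sum_(p <- lam u) eps p.1 *: G p.2 = G u.
Proof.
move=> HG; rewrite -[in RHS](lca_counit HL u) (lin1_sum _ _ HG).
by apply: eq_bigr => p _; rewrite (lin1Z _ _ HG).
Qed.

End LeftComodule.

Section RightComodule.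
Variables (M : lmodType k) (mul : M -> M -> M) (one : M) (rho : M -> seq (M * H)).
Hypothesis HR : is_right_comodule_algebra Delta eps mul one rho.

Lemma big_rhoM (X : lmodType k) x y (F : M * H -> X) :
  multilin2 (fun a b => F (a, b)) ->
  \sum_(p <- rho (mul x y)) F p =
  \sum_(p <- rho x) \sum_(q <- rho y) F (mul p.1 q.1, p.2 * q.2).
Proof. by move=> HF; rewrite (teq2_sum (rca_mul HR x y) HF) big_allpairs_dep. Qed.

Lemma big_rho1 (X : lmodType k) (F : M * H -> X) :
  multilin2 (fun a b => F (a, b)) -> \sum_(p <- rho one) F p = F (one, 1).
Proof. by move=> HF; rewrite (teq2_sum (rca_one HR) HF) big_seq1. Qed.

Lemma big_rho_counit (X : lmodType k) u (G : M -> X) :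
  lin1 G -> \sum_(p <- rho u) eps p.2 *: G p.1 = G u.
Proof.
move=> HG; rewrite -[in RHS](rca_counit HR u) (lin1_sum _ _ HG).
by apply: eq_bigr => p _; rewrite (lin1Z _ _ HG).
Qed.

End RightComodule.

Lemma sumD_big (T : lmodType k) (F : H -> H -> T) h :
  sumD +%R 0 Delta h F = \sum_(p <- Delta h) F p.1 p.2.
Proof.
rewrite /sumD; elim: (Delta h) => [|p s IH]; first by rewrite big_nil.
by rewrite big_cons /= IH.
Qed.

Section LeftModule.
Variables (M : lmodType k) (mul : M -> M -> M) (one : M) (act : H -> M -> M).
Hypothesis HM : H_left_module_algebra Delta eps mul one act.

Lemma lact_linH c : lin1 (fun h => act h c).
Proof. by move=> a g h; exact: (lma_linH HM a g h c). Qed.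

Lemma lact_linT h : lin1 (fun c => act h c).
Proof. by move=> a x y; exact: (lma_linT HM h a x y). Qed.

Lemma lact_mul h x y :
  act h (mul x y) = \sum_(p <- Delta h) mul (act p.1 x) (act p.2 y).
Proof. by rewrite (lma_act_mul HM h x y) sumD_big. Qed.

End LeftModule.

Section RightModule.
Variables (M : lmodType k) (mul : M -> M -> M) (one : M) (ract : M -> H -> M).
Hypothesis HM : is_right_module_algebra (@eq M) +%R 0 ( *:%R) mul one Delta eps ract.

Lemma ract_linH c : lin1 (fun h => ract c h).
Proof. by move=> a g h; exact: (rma_linH HM a g h c). Qed.

Lemma ract_linT h : lin1 (fun c => ract c h).
Proof. by move=> a x y; exact: (rma_linT HM h a x y). Qed.

Lemma ract_mul h x y :
  ract (mul x y) h = \sum_(p <- Delta h) mul (ract x p.1) (ract y p.2).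
Proof. by rewrite (rma_act_mul HM h x y) sumD_big. Qed.

End RightModule.

Lemma big_YD_compat (M : lmodType k) (mul : M -> M -> M) (one : M)
    (act : H -> M -> M) (lam : M -> seq (H * M))
    (HY : is_YD_algebra Delta eps mul one act lam) (X : lmodType k) h a
    (F : H * M -> X) :
  multilin2 (fun x y => F (x, y)) ->
  \sum_(p <- Delta h) \sum_(q <- lam a) F (p.1 * q.1, act p.2 q.2) =
  \sum_(p <- Delta h) \sum_(q <- lam (act p.1 a)) F (q.1 * p.2, q.2).
Proof.
by move=> HF; have := teq2_sum (yd_compat HY h a) HF; rewrite !big_allpairs_dep.
Qed.

End SweedlerSums.

Section AlgebraOn.
Variables (k : fieldType) (M : lmodType k) (mul : M -> M -> M) (one : M).
Hypothesis HA : algebra_on mul one.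

Lemma algmul_linl c : lin1 (fun x => mul x c).
Proof. by move=> a x y; exact: (alg_mul_linl HA a x y c). Qed.

Lemma algmul_linr c : lin1 (fun x => mul c x).
Proof. by move=> a x y; exact: (alg_mul_linr HA a c x y). Qed.

End AlgebraOn.

Section SmashAlgebra.
Variables (k : fieldType) (H : algType k) (Delta : H -> seq (H * H)) (eps : H -> k).
Variables (M : lmodType k) (mulM : M -> M -> M) (oneM : M) (actM : H -> M -> M).
Hypothesis HM : H_left_module_algebra Delta eps mulM oneM actM.
Variables (N : lmodType k) (mulN : N -> N -> N) (oneN : N) (lamN : N -> seq (H * N)).
Hypothesis HN : is_left_comodule_algebra Delta eps mulN oneN lamN.

Let mulM_linl := algmul_linl (lma_alg HM).
Let mulM_linr := algmul_linr (lma_alg HM).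
Let mulN_linl := algmul_linl (lca_alg HN).
Let mulN_linr := algmul_linr (lca_alg HN).
Let actM_linH := lact_linH HM.
Let actM_linT := lact_linT HM.
Let lamN_tlin2 : tlin2 lamN := lca_lin HN.

Notation sm := (smash_mul mulM mulN actM lamN).

Lemma big_smash_mul (X : lmodType k) (F : M * N -> X) s t :
  \sum_(x <- sm s t) F x = \sum_(p <- s) \sum_(q <- t) \sum_(r <- lamN p.2)
     F (mulM p.1 (actM r.1 q.1), mulN r.2 q.2).
Proof.
rewrite /smash_mul big_allpairs_dep; apply: eq_bigr => p _.
by rewrite big_allpairs_dep.
Qed.

Lemma smash_mulA s t u : teq2 (sm (sm s t) u) (sm s (sm t u)).
Proof.
move=> X f [Hf1 Hf2]; rewrite !big_smash_mul.
under [RHS]eq_bigr => p _ do rewrite big_smash_mul.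
cs.
deepL ltac:(srw (big_lamM HN)). cs.
deepL ltac:(rewrite (lma_actM HM) (alg_mulA (lma_alg HM)) (alg_mulA (lca_alg HN))).
deepR ltac:(rewrite (lact_mul HM) (lin1_sum _ _ (mulM_linr _)) (lin1_sum _ _ (Hf1 _))).
atR 4%N ltac:(srw (big_coassoc (lca_coassoc HN _))). cs.
atL 2%N ltac:(rewrite exchange_big).
atL 4%N ltac:(rewrite exchange_big).
atL 3%N ltac:(rewrite exchange_big).
reflexivity.
Qed.

Lemma smash_mul_algebra :
  is_algebra (@teq2 k M N) cat (@tscale2 k M N) sm (smash_one oneM oneN).
Proof.
split.
- move=> x x' y y' Hx Hy X f [Hf1 Hf2].
  rewrite !big_smash_mul; srw (teq2_sum Hx).
  by under eq_bigr => p _ do srw (teq2_sum Hy).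
- move=> a x x' y X f [Hf1 Hf2].
  by srw big_tscale2; rewrite !big_smash_mul; srw big_tscale2.
- move=> a x y y' X f [Hf1 Hf2].
  srw big_tscale2; rewrite !big_smash_mul.
  under eq_bigr => p _ do srw big_tscale2.
  by rewrite big_split /= -scaler_sumr.
- exact: smash_mulA.
- move=> y X f [Hf1 Hf2].
  rewrite big_smash_mul big_seq1 /=; apply: eq_bigr => q _.
  by srw (big_lam1 HN); rewrite /= (lma_act1 HM) (alg_mul1l (lma_alg HM))
    (alg_mul1l (lca_alg HN)).
- move=> y X f [Hf1 Hf2].
  rewrite big_smash_mul; apply: eq_bigr => p _; rewrite big_seq1 /=.
  under eq_bigr => r _ do rewrite (lma_act_one HM) (alg_mul1r (lca_alg HN))
    (lin1Z _ _ (mulM_linr _)) (lin1Z _ _ (Hf1 _)).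
  by rewrite (alg_mul1r (lma_alg HM)) (big_lam_counit HN _ (G := fun n => f p.1 n)).
Qed.

End SmashAlgebra.

Section SmashMaps.
Variables (k : fieldType) (H : algType k) (Delta : H -> seq (H * H)).

Lemma big_smash_lact (M N X : lmodType k) (actM : H -> M -> M) (actN : H -> N -> N)
    (F : M * N -> X) h s :
  \sum_(z <- smash_lact Delta actM actN h s) F z =
  \sum_(q <- s) \sum_(p <- Delta h) F (actM p.1 q.1, actN p.2 q.2).
Proof. by rewrite /smash_lact big_allpairs_dep. Qed.

Lemma big_smash_ract (M N X : lmodType k) (ract : M -> H -> M) (F : M * N -> X) h s :
  \sum_(z <- smash_ract ract s h) F z = \sum_(q <- s) F (ract q.1 h, q.2).
Proof. by rewrite /smash_ract big_map. Qed.

Lemma big_sumD (M N X : lmodType k) (G : H -> H -> seq (M * N)) (F : M * N -> X) h :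
  \sum_(z <- sumD cat [::] Delta h G) F z =
  \sum_(p <- Delta h) \sum_(z <- G p.1 p.2) F z.
Proof.
rewrite /sumD; elim: (Delta h) => [|p s IH]; first by rewrite !big_nil.
by rewrite big_cons /= big_cat IH.
Qed.

Lemma big_smash_lam (M N X : lmodType k) (lamM : M -> seq (H * M))
    (lamN : N -> seq (H * N)) (F : H * M * N -> X) s :
  \sum_(z <- smash_lam lamM lamN s) F z =
  \sum_(q <- s) \sum_(p <- lamM q.1) \sum_(r <- lamN q.2) F (p.1 * r.1, p.2, r.2).
Proof.
rewrite /smash_lam big_allpairs_dep; apply: eq_bigr => q _.
by rewrite big_allpairs_dep.
Qed.

Lemma big_smash_rho (M N X : lmodType k) (rhoN : N -> seq (N * H))
    (F : M * N * H -> X) s :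
  \sum_(z <- smash_rho rhoN s) F z =
  \sum_(q <- s) \sum_(p <- rhoN q.2) F (q.1, p.1, p.2).
Proof. by rewrite /smash_rho big_allpairs_dep. Qed.

End SmashMaps.

Section SmashBimoduleAlgebra.
Variables (k : fieldType) (H : algType k) (Delta : H -> seq (H * H)) (eps : H -> k).
Hypothesis HB : is_bialgebra Delta eps.
Variables (cA : lmodType k) (mulc : cA -> cA -> cA) (onec : cA)
    (lactc : H -> cA -> cA) (ractc : cA -> H -> cA).
Hypothesis HC : H_bimodule_algebra Delta eps mulc onec lactc ractc.
Variables (A : lmodType k) (mulA : A -> A -> A) (oneA : A)
    (actA : H -> A -> A) (lamA : A -> seq (H * A)).
Hypothesis HY : is_YD_algebra Delta eps mulA oneA actA lamA.

Let HCL : H_left_module_algebra Delta eps mulc onec lactc := bma_left HC.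
Let HCR := bma_right HC.
Let HAM := yd_module HY.
Let HAL := yd_comodule HY.

Let mulc_linl := algmul_linl (lma_alg HCL).
Let mulc_linr := algmul_linr (lma_alg HCL).
Let mulA_linl := algmul_linl (lca_alg HAL).
Let mulA_linr := algmul_linr (lca_alg HAL).
Let lactc_linH := lact_linH HCL.
Let lactc_linT := lact_linT HCL.
Let actA_linH := lact_linH HAM.
Let actA_linT := lact_linT HAM.
Let ractc_linH := ract_linH HCR.
Let ractc_linT := ract_linT HCR.
Let Delta_tlin2 : tlin2 Delta := bi_Delta_lin HB.
Let lamA_tlin2 : tlin2 lamA := lca_lin HAL.

Notation sm := (smash_mul mulc mulA lactc lamA).
Notation lact := (smash_lact Delta lactc actA).
Notation ract := (smash_ract ractc).

Lemma smash_lact_mul h x y :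
  teq2 (lact h (sm x y))
       (sumD cat [::] Delta h (fun h1 h2 => sm (lact h1 x) (lact h2 y))).
Proof.
move=> X f [Hf1 Hf2].
rewrite big_smash_lact big_smash_mul big_sumD; cs.
deepL ltac:(rewrite (lact_mul HCL) (lact_mul HAM) (lin1_sum _ _ (Hf1 _))).
deepL ltac:(rewrite (lin1_sum _ _ (Hf2 _))).
deepL ltac:(rewrite -(lma_actM HCL)).
atL 3%N ltac:(srw (big_Delta_coassoc4 HB)); cs.
atL 2%N ltac:(rewrite exchange_big). atL 3%N ltac:(rewrite exchange_big).
atL 4%N ltac:(rewrite exchange_big).
under [LHS]eq_bigr => p _. under eq_bigr => q _. under eq_bigr => d _.
  under eq_bigr => q' _.
    rewrite (big_YD_compat HY _ _ (F := fun z => f (mulc (lactc q'.1 p.1) (lactc z.1 q.1))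
                                       (mulA z.2 (actA d.2 q.2)))); last by solve_ml.
    over. over. over. over.
cs.
deepR ltac:(rewrite big_smash_mul).
deepR ltac:(rewrite big_smash_lact).
deepR ltac:(rewrite big_smash_lact). cs.
deepR ltac:(rewrite -(lma_actM HCL)).
rewrite [RHS]exchange_big. atR 2%N ltac:(rewrite exchange_big).
atR 1%N ltac:(rewrite exchange_big).
atR 2%N ltac:(srw (big_Delta_coassoc4 HB)); cs.
reflexivity.
Qed.

Lemma smash_lact_module_algebra : is_left_module_algebra (@teq2 k cA A) cat [::]
    (@tscale2 k cA A) sm (smash_one onec oneA) Delta eps lact.
Proof.
split.
- exact: (smash_mul_algebra HCL HAL).
- move=> h x y Hxy X f [Hf1 Hf2].
  by rewrite !big_smash_lact; srw (teq2_sum Hxy).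
- move=> a g h x X f [Hf1 Hf2].
  srw big_tscale2; rewrite !big_smash_lact.
  have L : lin1 (fun h => \sum_(q <- x) \sum_(p <- Delta h)
            f (lactc p.1 q.1, actA p.2 q.2).1 (lactc p.1 q.1, actA p.2 q.2).2).
    solve_lin.
  by have := L a g h; cbv beta => ->.
- move=> h a x y X f [Hf1 Hf2].
  by srw big_tscale2; rewrite !big_smash_lact; srw big_tscale2.
- move=> x X f [Hf1 Hf2].
  rewrite big_smash_lact; apply: eq_bigr => q _.
  by srw (big_Delta1 HB); rewrite /= (lma_act1 HCL) (lma_act1 HAM).
- move=> g h x X f [Hf1 Hf2].
  rewrite !big_smash_lact; cs.
  deepL ltac:(srw (big_DeltaM HB)); cs.
  deepL ltac:(rewrite (lma_actM HCL) (lma_actM HAM)).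
  by atL 1%N ltac:(rewrite exchange_big).
- exact: smash_lact_mul.
- move=> h X f [Hf1 Hf2].
  rewrite big_smash_lact big_seq1 big_map /= big_seq1; cs.
  under eq_bigr => p _ do rewrite (lma_act_one HCL) (lma_act_one HAM)
    (lin1Z _ _ (Hf1 _)) (lin1Z _ _ (Hf2 _)).
  rewrite (big_Delta_counitl HB _ (G := fun h0 => eps h0 *: f onec oneA));
    last by solve_lin.
  by rewrite (lin1Z _ _ (Hf1 _)).
Qed.

Lemma smash_ract_module_algebra : is_right_module_algebra (@teq2 k cA A) cat [::]
    (@tscale2 k cA A) sm (smash_one onec oneA) Delta eps ract.
Proof.
split.
- exact: (smash_mul_algebra HCL HAL).
- move=> h x y Hxy X f [Hf1 Hf2].
  by rewrite !big_smash_ract; srw (teq2_sum Hxy).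
- move=> a g h x X f [Hf1 Hf2].
  srw big_tscale2; rewrite !big_smash_ract.
  have L : lin1 (fun h => \sum_(q <- x) f (ractc q.1 h, q.2).1 (ractc q.1 h, q.2).2).
    solve_lin.
  by have := L a g h; cbv beta => ->.
- move=> h a x y X f [Hf1 Hf2].
  by srw big_tscale2; rewrite !big_smash_ract; srw big_tscale2.
- move=> x X f [Hf1 Hf2].
  by rewrite big_smash_ract; apply: eq_bigr => q _; rewrite /= (rma_act1 HCR).
- move=> g h x X f [Hf1 Hf2].
  by rewrite !big_smash_ract; apply: eq_bigr => q _; rewrite /= (rma_actM HCR).
- move=> h x y X f [Hf1 Hf2].
  rewrite big_smash_ract big_smash_mul big_sumD; cs.
  deepL ltac:(rewrite (ract_mul HCR) (lin1_sum _ _ (Hf1 _))).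
  deepL ltac:(rewrite -(bma_comm HC)).
  atL 2%N ltac:(rewrite exchange_big). atL 1%N ltac:(rewrite exchange_big).
  rewrite [LHS]exchange_big.
  deepR ltac:(rewrite big_smash_mul).
  deepR ltac:(rewrite big_smash_ract).
  by deepR ltac:(rewrite big_smash_ract).
- move=> h X f [Hf1 Hf2].
  by rewrite big_smash_ract /smash_one !big_seq1 /= (rma_act_one HCR).
Qed.

Lemma smash_bimodule_algebra : is_bimodule_algebra (@teq2 k cA A) cat [::]
    (@tscale2 k cA A) sm (smash_one onec oneA) Delta eps lact ract.
Proof.
split; [exact: smash_lact_module_algebra | exact: smash_ract_module_algebra |].
move=> h g x X f [Hf1 Hf2].
rewrite big_smash_lact !big_smash_ract big_smash_lact; cs.
by apply: eq_bigr => q _; apply: eq_bigr => d _; rewrite (bma_comm HC).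
Qed.

End SmashBimoduleAlgebra.

Section SmashBicomoduleAlgebra.
Variables (k : fieldType) (H : algType k) (Delta : H -> seq (H * H)) (eps : H -> k).
Hypothesis HB : is_bialgebra Delta eps.
Variables (bA : lmodType k) (mulb : bA -> bA -> bA) (oneb : bA)
    (lamb : bA -> seq (H * bA)) (rhob : bA -> seq (bA * H)).
Hypothesis HbA : is_bicomodule_algebra Delta eps mulb oneb lamb rhob.
Variables (A : lmodType k) (mulA : A -> A -> A) (oneA : A)
    (actA : H -> A -> A) (lamA : A -> seq (H * A)).
Hypothesis HY : is_YD_algebra Delta eps mulA oneA actA lamA.

Let HAM := yd_module HY.
Let HAL := yd_comodule HY.
Let HbL := bca_left HbA.
Let HbR := bca_right HbA.

Let mulA_linr := algmul_linr (lma_alg HAM).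
Let mulb_linl := algmul_linl (lca_alg HbL).
Let actA_linH := lact_linH HAM.
Let lamA_tlin2 : tlin2 lamA := lca_lin HAL.
Let lamb_tlin2 : tlin2 lamb := lca_lin HbL.
Let rhob_tlin2 : tlin2 rhob := rca_lin HbR.

Notation sm := (smash_mul mulA mulb actA lamb).
Notation lam := (smash_lam lamA lamb).
Notation rho := (smash_rho rhob).

Lemma smash_lam_coassoc (s : seq (A * bA)) :
  teq4 [seq (q.1, q.2, p.1.2, p.2) | p <- lam s, q <- Delta p.1.1]
       [seq (p.1.1, q.1.1, q.1.2, q.2) | p <- lam s, q <- lam [:: (p.1.2, p.2)]].
Proof.
move=> X f [Hf1 Hf2 Hf3 Hf4].
rewrite [LHS]big_allpairs_dep [RHS]big_allpairs_dep !big_smash_lam; cs.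
deepR ltac:(rewrite big_smash_lam big_seq1). cs.
deepL ltac:(srw (big_DeltaM HB)). cs.
atL 2%N ltac:(rewrite exchange_big).
atL 1%N ltac:(srw (big_coassoc (lca_coassoc HAL _))). cs.
atL 3%N ltac:(srw (big_coassoc (lca_coassoc HbL _))). cs.
by atL 2%N ltac:(rewrite exchange_big).
Qed.

Lemma smash_lam_counit (s : seq (A * bA)) :
  teq2 [seq (eps p.1.1 *: p.1.2, p.2) | p <- lam s] s.
Proof.
move=> X f [Hf1 Hf2].
rewrite big_map big_smash_lam; cs; apply: eq_bigr => w _.
under eq_bigr => a _ do under eq_bigr => b _ do
  rewrite (bi_epsM HB) -scalerA !(lin1Z _ _ (Hf1 _)).
under eq_bigr => a _.
  rewrite -scaler_sumr (big_lam_counit HbL _ (G := fun n => f a.2 n)); last by solve_lin.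
  over.
by rewrite (big_lam_counit HAL _ (G := fun m => f m w.2)); last by solve_lin.
Qed.

Lemma smash_rho_coassoc (s : seq (A * bA)) :
  teq4 [seq (q.1.1, q.1.2, q.2, p.2) | p <- rho s, q <- rho [:: (p.1.1, p.1.2)]]
       [seq (p.1.1, p.1.2, q.1, q.2) | p <- rho s, q <- Delta p.2].
Proof.
move=> X f [Hf1 Hf2 Hf3 Hf4].
rewrite [LHS]big_allpairs_dep [RHS]big_allpairs_dep !big_smash_rho; cs.
deepL ltac:(rewrite big_smash_rho big_seq1). cs.
by atR 1%N ltac:(srw (big_coassocV (rca_coassoc HbR _))).
Qed.

Lemma smash_rho_counit (s : seq (A * bA)) :
  teq2 [seq (eps p.2 *: p.1.1, p.1.2) | p <- rho s] s.
Proof.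
move=> X f [Hf1 Hf2].
rewrite big_map big_smash_rho; cs; apply: eq_bigr => w _.
under eq_bigr => c _ do rewrite (lin1Z _ _ (Hf1 _)).
by rewrite (big_rho_counit HbR _ (G := fun n => f w.1 n)); last by solve_lin.
Qed.

Lemma smash_lam_mul (s t : seq (A * bA)) :
  teq3 (lam (sm s t))
       [seq x | p <- lam s,
          x <- [seq (p.1.1 * q.1.1, y.1, y.2)
               | q <- lam t, y <- sm [:: (p.1.2, p.2)] [:: (q.1.2, q.2)]]].
Proof.
move=> X f [Hf1 Hf2 Hf3].
rewrite big_smash_lam big_smash_mul; cs.
deepL ltac:(srw (big_lamM HAL)). cs.
deepL ltac:(srw (big_lamM HbL)). cs.
atL 4%N ltac:(rewrite exchange_big). atL 3%N ltac:(rewrite exchange_big).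
atL 2%N ltac:(srw (big_coassocV (lca_coassoc HbL _))). cs.
atL 3%N ltac:(rewrite exchange_big).
under [LHS]eq_bigr => p _. under eq_bigr => q _. under eq_bigr => r _.
  under eq_bigr => a _.
    deep ltac:(rewrite mulrA -(mulrA a.1)).
    rewrite -(big_YD_compat HY r.1 q.1 (F := fun z => \sum_(b' <- lamb q.2)
         f (a.1 * z.1 * b'.1) (mulA a.2 z.2) (mulb r.2 b'.2))); last by solve_ml.
    over.
  over. over. over.
cs.
atL 3%N ltac:(rewrite exchange_big).
atL 2%N ltac:(srw (big_coassoc (lca_coassoc HbL _))). cs.
rewrite [RHS]big_allpairs_dep big_smash_lam; cs.
deepR ltac:(rewrite big_allpairs_dep).
deepR ltac:(rewrite big_smash_lam).
deepR ltac:(rewrite big_smash_mul !big_seq1). cs.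
deepL ltac:(rewrite !mulrA). deepR ltac:(rewrite !mulrA).
atL 3%N ltac:(rewrite exchange_big). atL 2%N ltac:(rewrite exchange_big).
atL 1%N ltac:(rewrite exchange_big). atL 2%N ltac:(rewrite exchange_big).
by atL 4%N ltac:(rewrite exchange_big); atL 5%N ltac:(rewrite exchange_big).
Qed.

Lemma smash_rho_mul (s t : seq (A * bA)) :
  teq3 (rho (sm s t))
       [seq x | p <- rho s,
          x <- [seq (y.1, y.2, p.2 * q.2)
               | q <- rho t, y <- sm [:: (p.1.1, p.1.2)] [:: (q.1.1, q.1.2)]]].
Proof.
move=> X f [Hf1 Hf2 Hf3].
rewrite big_smash_rho big_smash_mul [RHS]big_allpairs_dep big_smash_rho; cs.
deepR ltac:(rewrite big_allpairs_dep).
deepR ltac:(rewrite big_smash_rho).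
deepR ltac:(rewrite big_smash_mul !big_seq1). cs.
deepL ltac:(srw (big_rhoM HbR)). cs.
atL 2%N ltac:(srw (big_coassocV (bca_compat HbA _))). cs.
by atL 1%N ltac:(rewrite exchange_big); atL 3%N ltac:(rewrite exchange_big).
Qed.

Lemma smash_lam_rho_compat (s : seq (A * bA)) :
  teq4 [seq (q.1.1, q.1.2, q.2, p.2) | p <- rho s, q <- lam [:: (p.1.1, p.1.2)]]
       [seq (p.1.1, q.1.1, q.1.2, q.2) | p <- lam s, q <- rho [:: (p.1.2, p.2)]].
Proof.
move=> X f [Hf1 Hf2 Hf3 Hf4].
rewrite [LHS]big_allpairs_dep [RHS]big_allpairs_dep big_smash_rho big_smash_lam; cs.
deepL ltac:(rewrite big_smash_lam big_seq1).
deepR ltac:(rewrite big_smash_rho big_seq1). cs.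
atL 1%N ltac:(rewrite exchange_big).
by atL 2%N ltac:(srw (big_coassoc (bca_compat HbA _))).
Qed.

Lemma smash_bicomodule_algebra :
  is_rep_bicomodule_algebra Delta eps sm (smash_one oneA oneb) lam rho.
Proof.
split.
- exact: (smash_mul_algebra HAM HbL).
- move=> s t Hst X f [Hf1 Hf2 Hf3].
  by rewrite !big_smash_lam; srw (teq2_sum Hst).
- move=> s t Hst X f [Hf1 Hf2 Hf3].
  by rewrite !big_smash_rho; srw (teq2_sum Hst).
- move=> a s t X f [Hf1 Hf2 Hf3].
  rewrite big_smash_lam; srw big_tscale2; rewrite big_cat big_map !big_smash_lam; cs.
  congr (_ + _); rewrite scaler_sumr; apply: eq_bigr => q _.
  rewrite scaler_sumr; apply: eq_bigr => p _.
  rewrite scaler_sumr; apply: eq_bigr => r _.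
  by rewrite (lin1Z _ _ (Hf1 _ _)).
- move=> a s t X f [Hf1 Hf2 Hf3].
  by srw big_tscale3; rewrite !big_smash_rho; srw big_tscale2.
- exact: smash_lam_coassoc.
- exact: smash_lam_counit.
- exact: smash_rho_coassoc.
- exact: smash_rho_counit.
- exact: smash_lam_mul.
- move=> X f [Hf1 Hf2 Hf3].
  rewrite big_smash_lam /smash_one big_seq1 big_map big_seq1 /=.
  by srw (big_lam1 HAL); cs; srw (big_lam1 HbL); cs; rewrite mulr1.
- exact: smash_rho_mul.
- move=> X f [Hf1 Hf2 Hf3].
  rewrite big_smash_rho /smash_one big_seq1 big_map big_seq1 /=.
  by srw (big_rho1 HbR).
- exact: smash_lam_rho_compat.
Qed.

End SmashBicomoduleAlgebra.

Section LRSmashMaps.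
Variables (k : fieldType) (H : algType k).

Lemma big_lr_mul_left (V1 V2 W X : lmodType k)
    (mulB : seq (V1 * V2) -> seq (V1 * V2) -> seq (V1 * V2))
    (lactB : H -> seq (V1 * V2) -> seq (V1 * V2))
    (ractB : seq (V1 * V2) -> H -> seq (V1 * V2))
    (mulW : W -> W -> W) (lamW : W -> seq (H * W)) (rhoW : W -> seq (W * H))
    (s t : seq (V1 * V2 * W)) (F : V1 * V2 * W -> X) :
  \sum_(z <- lr_mul_left mulB lactB ractB mulW lamW rhoW s t) F z =
  \sum_(x <- s) \sum_(y <- t) \sum_(p <- rhoW y.2) \sum_(q <- lamW x.2)
    \sum_(b <- mulB (ractB [:: x.1] p.2) (lactB q.1 [:: y.1]))
      F (b.1, b.2, mulW q.2 p.1).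
Proof.
rewrite /lr_mul_left big_allpairs_dep; apply: eq_bigr => x _.
rewrite big_allpairs_dep; apply: eq_bigr => y _.
by rewrite big_allpairs_dep; apply: eq_bigr => p _; rewrite big_allpairs_dep.
Qed.

Lemma big_lr_mul_right (V1 V2 W X : lmodType k)
    (mulV : V1 -> V1 -> V1) (lactV : H -> V1 -> V1) (ractV : V1 -> H -> V1)
    (mulB : seq (V2 * W) -> seq (V2 * W) -> seq (V2 * W))
    (lamB : seq (V2 * W) -> seq (H * V2 * W))
    (rhoB : seq (V2 * W) -> seq (V2 * W * H))
    (s t : seq (V1 * V2 * W)) (F : V1 * V2 * W -> X) :
  \sum_(z <- lr_mul_right mulV lactV ractV mulB lamB rhoB s t) F z =
  \sum_(x <- s) \sum_(y <- t) \sum_(p <- rhoB [:: (y.1.2, y.2)])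
    \sum_(q <- lamB [:: (x.1.2, x.2)])
    \sum_(b <- mulB [:: (q.1.2, q.2)] [:: (p.1.1, p.1.2)])
      F (mulV (ractV x.1.1 p.2) (lactV q.1.1 y.1.1), b.1, b.2).
Proof.
rewrite /lr_mul_right big_allpairs_dep; apply: eq_bigr => x _.
rewrite big_allpairs_dep; apply: eq_bigr => y _.
by rewrite big_allpairs_dep; apply: eq_bigr => p _; rewrite big_allpairs_dep.
Qed.

End LRSmashMaps.

Section LRSmashAssociativity.
Variables (k : fieldType) (H : algType k) (Delta : H -> seq (H * H)) (eps : H -> k).
Variables (cA : lmodType k) (mulc : cA -> cA -> cA) (onec : cA)
    (lactc : H -> cA -> cA) (ractc : cA -> H -> cA).
Hypothesis HC : H_bimodule_algebra Delta eps mulc onec lactc ractc.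
Variables (bA : lmodType k) (mulb : bA -> bA -> bA) (oneb : bA)
    (lamb : bA -> seq (H * bA)) (rhob : bA -> seq (bA * H)).
Hypothesis HbA : is_bicomodule_algebra Delta eps mulb oneb lamb rhob.
Variables (A : lmodType k) (mulA : A -> A -> A) (oneA : A)
    (actA : H -> A -> A) (lamA : A -> seq (H * A)).
Hypothesis HY : is_YD_algebra Delta eps mulA oneA actA lamA.

Let HCL : H_left_module_algebra Delta eps mulc onec lactc := bma_left HC.
Let HAM := yd_module HY.
Let HAL := yd_comodule HY.
Let HbL := bca_left HbA.

Let mulc_linr := algmul_linr (lma_alg HCL).
Let mulA_linr := algmul_linr (lca_alg HAL).
Let mulb_linl := algmul_linl (lca_alg HbL).
Let lactc_linH := lact_linH HCL.
Let lactc_linT := lact_linT HCL.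
Let actA_linH := lact_linH HAM.

Lemma lr_smash_mul_assoc (s t : seq (cA * A * bA)) :
  teq3
    (lr_mul_left (smash_mul mulc mulA lactc lamA)
       (smash_lact Delta lactc actA) (smash_ract ractc) mulb lamb rhob s t)
    (lr_mul_right mulc lactc ractc (smash_mul mulA mulb actA lamb)
       (smash_lam lamA lamb) (smash_rho rhob) s t).
Proof.
move=> X f [Hf1 Hf2 Hf3].
rewrite big_lr_mul_left big_lr_mul_right; cs.
deepL ltac:(rewrite big_smash_mul big_smash_ract big_seq1); cs.
deepL ltac:(rewrite big_smash_lact big_seq1); cs.
deepR ltac:(rewrite big_smash_rho big_seq1); cs.
deepR ltac:(rewrite big_smash_lam big_seq1); cs.
deepR ltac:(rewrite big_smash_mul !big_seq1); cs.
atL 4%N ltac:(rewrite exchange_big). atL 3%N ltac:(rewrite exchange_big).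
atL 4%N ltac:(srw (big_coassoc (lca_coassoc HbL _))); cs.
by deepR ltac:(rewrite (lma_actM HCL)).
Qed.

End LRSmashAssociativity.

Theorem proposition3p4 (k : fieldType) (H : algType k)
    (Delta : H -> seq (H * H)) (eps : H -> k)
    (cA : lmodType k) (mulc : cA -> cA -> cA) (onec : cA)
    (lactc : H -> cA -> cA) (ractc : cA -> H -> cA)
    (bA : lmodType k) (mulb : bA -> bA -> bA) (oneb : bA)
    (lamb : bA -> seq (H * bA)) (rhob : bA -> seq (bA * H))
    (A : lmodType k) (mulA : A -> A -> A) (oneA : A)
    (actA : H -> A -> A) (lamA : A -> seq (H * A)) :
  is_bialgebra Delta eps ->
  H_bimodule_algebra Delta eps mulc onec lactc ractc ->
  is_bicomodule_algebra Delta eps mulb oneb lamb rhob ->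
  is_YD_algebra Delta eps mulA oneA actA lamA ->
  is_bimodule_algebra (@teq2 k cA A) cat [::] (@tscale2 k cA A)
    (smash_mul mulc mulA lactc lamA) (smash_one onec oneA) Delta eps
    (smash_lact Delta lactc actA) (smash_ract ractc)
  /\ is_rep_bicomodule_algebra Delta eps
       (smash_mul mulA mulb actA lamb) (smash_one oneA oneb)
       (smash_lam lamA lamb) (smash_rho rhob)
  /\ (forall s t : seq (cA * A * bA),
        teq3
          (lr_mul_left (smash_mul mulc mulA lactc lamA)
             (smash_lact Delta lactc actA) (smash_ract ractc) mulb lamb rhob s t)
          (lr_mul_right mulc lactc ractc (smash_mul mulA mulb actA lamb)
             (smash_lam lamA lamb) (smash_rho rhob) s t)).
Proof.
move=> HB HC HbA HY; split; first exact: (smash_bimodule_algebra HB HC HY).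
split; first exact: (smash_bicomodule_algebra HB HbA HY).
exact: (lr_smash_mul_assoc HC HbA HY).
Qed.
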